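(* Let $X$ be a compact metric countable space and $f:X\to X$ a continuous function such that every accumulation point of $X$ is periodic. Let $a$ be an accumulation point of $X$. If there are a sequence $(a_n)_{n\in\mathbb N}$ in $X$ and a periodic point $b\in X\setminus\mathcal O_f(a)$ such that $a_n\to a$ and $b\in\overline{\mathcal O_f(a_n)}$ for every $n\in\mathbb N$, then $f^p$ is discontinuous at $a$ for every $p\in\mathbb N^*$.
   Context: $\mathbb N^*$ denotes the set of free ultrafilters on $\mathbb N$. For $p\in\mathbb N^*$, the $p$-iterate $f^p:X\to X$ is defined by $f^p(x)=p\text{-}\lim_{n\to\infty}f^n(x)$, where $y=p\text{-}\lim x_n$ means $\{n: x_n\in V\}\in p$ for every neighborhood $V$ of $y$. The orbit of $x$ is $\mathcal O_f(x)=\{f^n(x):n\in\mathbb N\}$. A point $x$ is periodic if $f^n(x)=x$ for some $n\ge1$. An accumulation point is a non-isolated point. *)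

From HB Require Import structures.
From mathcomp Require Import all_boot all_order all_algebra.
From mathcomp Require Import all_classical all_reals all_analysis.
From Stdlib Require Import ClassicalEpsilon.
Set Implicit Arguments. Unset Strict Implicit. Unset Printing Implicit Defensive.
Import Order.TTheory GRing.Theory Num.Theory.
Local Open Scope classical_set_scope.

(* p ∈ ℕ^* : a free (non-principal) ultrafilter on nat, given as a set of sets of nat *)
Definition free_ultrafilter (p : set_system nat) : Prop :=
  UltraFilter p /\ (forall n : nat, ~ p [set n]).

Definition is_plim {X : topologicalType} (p : set_system nat) (x : nat -> X) (y : X) : Prop :=
  forall V : set X, nbhs y V -> p [set n | V (x n)].

(* the p-iterate f^p(x) = p-lim_n f^n(x) (chosen by description; it exists and is
   unique in a compact Hausdorff space) *)
Definition piterate {X : topologicalType} (p : set_system nat) (f : X -> X) (x : X) : X :=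
  epsilon (inhabits x) (is_plim p (fun n => iter n f x)).

Definition forbit {X : Type} (f : X -> X) (x : X) : set X := [set iter n f x | n in [set: nat]].

Definition periodic_point {X : Type} (f : X -> X) (x : X) : Prop :=
  exists n : nat, (1 <= n)%N /\ iter n f x = x.

Definition accumulation_point {X : topologicalType} (x : X) : Prop :=
  ~ nbhs x [set x].

(* Every ω-limit set is a single periodic orbit.  A countable compact metric
   space is scattered, so ω(x) has a point z isolated in ω(x); z is periodic,
   and its finite orbit O is isolated in ω(x) uniformly, within some radius r.
   If ω(x) had a point off O, the orbit of x would enter and leave the
   r/2-neighbourhood U of O infinitely often; a cluster point v of the exit
   points lies in ω(x) and near O, hence on O, while f v, again on O, is
   adherent to the complement of U: absurd.
   Now f^p(y) ∈ ω(y) for every y.  As a is periodic, ω(a) = O(a); as the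
   periodic point b is adherent to the orbit of a_n, ω(a_n) = O(b).  The finite
   set O(b) is closed, so continuity of f^p at a gives f^p(a) ∈ O(b), whence
   b ∈ O(a). *)

From HB Require Import structures.
From mathcomp Require Import all_boot all_order all_algebra.
From mathcomp Require Import all_classical all_reals all_analysis.
From Stdlib Require Import ClassicalEpsilon.
Set Implicit Arguments. Unset Strict Implicit. Unset Printing Implicit Defensive.
Import Order.TTheory GRing.Theory Num.Theory.
Local Open Scope classical_set_scope.

Section periodic_orbits.
Variables (T : Type) (f : T -> T).

Lemma iter_periodM k z i : iter k f z = z -> iter (k * i) f z = z.
Proof. by move=> zk; elim: i => [|i IH]; rewrite ?muln0 // mulnS iterD IH zk. Qed.

Lemma iter_period_mod k z i : iter k f z = z -> iter i f z = iter (i %% k) f z.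
Proof. by move=> zk; rewrite {1}(divn_eq i k) addnC iterD mulnC iter_periodM. Qed.

Lemma iter_period_inv k z m : (0 < k)%N -> iter k f z = z ->
  iter (k * m - m) f (iter m f z) = z.
Proof. by move=> k_gt0 zk; rewrite -iterD subnK ?iter_periodM // leq_pmull. Qed.

Lemma forbitxx x : forbit f x x.
Proof. by exists 0%N. Qed.

Lemma forbitS x y : forbit f x y -> forbit f x (f y).
Proof. by move=> [n _ <-]; exists n.+1. Qed.

Lemma forbit_trans x y : forbit f x y -> forbit f y `<=` forbit f x.
Proof. by move=> [m _ <-] _ [n _ <-]; exists (n + m) => //; rewrite iterD. Qed.

Lemma forbit_periodicE k z : (0 < k)%N -> iter k f z = z ->
  forbit f z = [set iter i f z | i in `I_k].
Proof.
move=> k_gt0 zk; apply/seteqP; split=> _ [i _ <-]; last by exists i.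
by exists (i %% k)%N; rewrite ?(iter_period_mod i zk) //= ltn_pmod.
Qed.

Lemma forbit_periodic_sym z y : periodic_point f z -> forbit f z y -> forbit f y z.
Proof.
by move=> [k [k_gt0 zk]] [m _ <-]; exists (k * m - m)%N; rewrite ?iter_period_inv.
Qed.

End periodic_orbits.

Lemma forbit_periodic_closed (T : topologicalType) (f : T -> T) z :
  accessible_space T -> periodic_point f z -> closed (forbit f z).
Proof.
move=> /accessible_finite_set_closed T1 [k [k_gt0 zk]].
by apply: T1; rewrite (forbit_periodicE k_gt0 zk); exact/finite_image/finite_II.
Qed.

Lemma discrete_crossing (P : nat -> Prop) m n : P m -> ~ P n -> (m <= n)%N ->
  exists2 t, (m <= t)%N & P t /\ ~ P t.+1.
Proof.
move=> Pm; elim: n => [|n IH] nPn; first by rewrite leqn0 => /eqP m0; rewrite m0 in Pm.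
rewrite leq_eqVlt => /orP[/eqP mn|]; first by rewrite mn in Pm.
rewrite ltnS => mn; have [Pn|nPn'] := pselect (P n); first by exists n.
exact: IH.
Qed.

Lemma free_ultrafilter_ge p N : free_ultrafilter p -> p [set n | (N <= n)%N].
Proof.
case=> p_ultra p_free; elim: N => [|N IH]; first exact: filterS filterT.
have [/p_free //|pNC] := in_ultra_setVsetC [set N] p_ultra.
by apply: filterS (filterI IH pNC) => n [Nn /eqP nN] /=; rewrite ltn_neqAle eq_sym nN.
Qed.

Section omega_limit.
Variable T : topologicalType.

Lemma cluster_seqP (u : nat -> T) y : cluster (u @ \oo) y <->
  forall V, nbhs y V -> forall N, exists2 n, (N <= n)%N & V (u n).
Proof.
split=> [cl V Vy N | cl A B [N _ uA] By].
  have tail : (u @ \oo) [set u n | n in [set n | (N <= n)%N]] by exists N => // n; exists n.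
  by have [_ [[n Nn <-] Vn]] := cl _ _ tail Vy; exists n.
by have [n Nn Bn] := cl B By N; exists (u n); split => //; exact: uA.
Qed.

Lemma compact_seq_cluster (u : nat -> T) : compact [set: T] -> exists v, cluster (u @ \oo) v.
Proof. by move=> Tc; have [v [_ cv]] := Tc (u @ \oo) _ filterT; exists v. Qed.

Lemma plim_cluster p (u : nat -> T) y : free_ultrafilter p -> is_plim p u y ->
  cluster (u @ \oo) y.
Proof.
move=> p_free uy A B [N _ uA] By; have p_ultra : UltraFilter p := p_free.1.
have [n [An Bn]] := filter_ex (filterI (filterS uA (free_ultrafilter_ge N p_free)) (uy B By)).
by exists (u n).
Qed.

Lemma plim_exists p (u : nat -> T) : compact [set: T] -> UltraFilter p ->
  exists y, is_plim p u y.
Proof.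
move=> Tc p_ultra; have [y [_ cly]] := Tc (u @ p) _ filterT.
exists y => V Vy; have [//|pVC] := in_ultra_setVsetC [set n | V (u n)] p_ultra.
by have [z [nVz Vz]] := cly _ _ (pVC : (u @ p) (~` V)) Vy.
Qed.

Variable f : T -> T.

Definition omega_limit (x : T) : set T := cluster ((fun n => iter n f x) @ \oo).

Lemma piterate_omega_limit p x : compact [set: T] -> free_ultrafilter p ->
  omega_limit x (piterate p f x).
Proof.
move=> Tc p_free; apply: (plim_cluster p_free).
by rewrite /piterate; apply: epsilon_spec; exact: plim_exists Tc p_free.1.
Qed.

Lemma forbit_periodic_omega_limit x z : periodic_point f z -> forbit f x z -> omega_limit x z.
Proof.
move=> [k [k_gt0 zk]] [m _ mz]; rewrite -mz in zk *.
apply/cluster_seqP => V /nbhs_singleton Vz N.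
exists (k * N + m)%N; first by rewrite (leq_trans (leq_pmull N k_gt0)) ?leq_addr.
by rewrite iterD iter_periodM.
Qed.

Lemma isolated_omega_limit_periodic x (y : T) : nbhs y [set y] -> omega_limit x y ->
  periodic_point f y.
Proof.
move=> y_iso /cluster_seqP Oy.
have [t1 _ /= t1y] := Oy _ y_iso 0%N; have [t2 t12 /= t2y] := Oy _ y_iso t1.+1.
exists (t2 - t1)%N; split; first by rewrite subn_gt0.
by rewrite -[in iter _ f y]t1y -iterD subnK ?t2y // ltnW.
Qed.

Lemma closure_forbit_omega_limit x z : accessible_space T -> periodic_point f z ->
  closure (forbit f x) z -> omega_limit x z.
Proof.
move=> T1 z_per clz.
have [/(forbit_periodic_omega_limit z_per) //|zNorb] := pselect (forbit f x z).
apply/cluster_seqP => V Vz N.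
pose init := [set iter t f x | t in `I_N].
have init_closed : closed init.
  by apply: (accessible_finite_set_closed.1 T1); exact/finite_image/finite_II.
have : nbhs z (V `&` ~` init).
  apply: filterI Vz (open_nbhs_nbhs _); split; first exact: closed_openC.
  by move=> [t _ tz]; apply: zNorb; exists t.
move=> /clz [_ [[t _ <-] [Vt tNinit]]]; exists t => //.
by rewrite leqNgt; apply/negP => tN; apply: tNinit; exists t.
Qed.

Hypothesis fcont : continuous f.

Lemma continuous_iter m : continuous (iter m f).
Proof.
elim: m => [|m IH] x; first exact: cvg_id.
by apply: continuous_comp; [exact: IH | exact: fcont].
Qed.

Lemma omega_limitS x y : omega_limit x y -> omega_limit x (f y).
Proof.
move=> /cluster_seqP Oy; apply/cluster_seqP => V /fcont /Oy Ox N.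
by have [t Nt Vt] := Ox N; exists t.+1 => //; exact: leqW.
Qed.

Lemma omega_limit_iter x y m : omega_limit x y -> omega_limit x (iter m f y).
Proof. by move=> Oy; elim: m => [|m IH] //; exact: omega_limitS. Qed.

Lemma omega_limit_exit (U : set T) x : compact [set: T] ->
  (forall N, exists2 t, (N <= t)%N & U (iter t f x)) ->
  (forall N, exists2 t, (N <= t)%N & ~ U (iter t f x)) ->
  exists v, [/\ omega_limit x v, closure U v & closure (~` U) (f v)].
Proof.
move=> Tc enter leave.
have exits N : exists t, (N <= t)%N /\ U (iter t f x) /\ ~ U (iter t.+1 f x).
  have [t1 Nt1 Ut1] := enter N; have [t2 t12 Ut2] := leave t1.
  have [t t1t exit_t] := @discrete_crossing (fun t => U (iter t f x)) _ _ Ut1 Ut2 t12.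
  by exists t; split=> //; exact: leq_trans t1t.
have [tau tauP] := @choice _ _ _ exits.
have [v /cluster_seqP cl] := compact_seq_cluster (fun N => iter (tau N) f x) Tc.
exists v; split.
- apply/cluster_seqP => V /cl Vv N; have [n Nn Vn] := Vv N.
  by exists (tau n) => //; exact: leq_trans (tauP n).1.
- move=> B /cl /(_ 0%N) [n _ Bn]; exists (iter (tau n) f x); split=> //.
  exact: (tauP n).2.1.
- move=> B /fcont /cl /(_ 0%N) [n _ Bn]; exists (iter (tau n).+1 f x); split=> //.
  exact: (tauP n).2.2.
Qed.

End omega_limit.

Lemma nbhs_common_radius (R : realDomainType) (X : pseudoMetricType R)
    (x_ : nat -> X) (U_ : nat -> set X) k :
  (forall i, (i < k)%N -> nbhs (x_ i) (U_ i)) ->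
  exists2 r : R, (0 < r)%R & forall i, (i < k)%N -> ball (x_ i) r `<=` U_ i.
Proof.
elim: k => [|k IH] U_nbhs; first by exists 1%R.
have [r r_gt0 rU] := IH (fun i ik => U_nbhs i (ltnW ik)).
have /nbhs_ballP [s /= s_gt0 sU] := U_nbhs k (ltnSn k).
exists (Num.min r s); first by rewrite lt_min r_gt0 s_gt0.
move=> i; rewrite ltnS leq_eqVlt => /orP[/eqP -> | ik].
  by apply: subset_trans sU; apply: le_ball; rewrite ge_min lexx orbT.
by apply: subset_trans (rU i ik); apply: le_ball; rewrite ge_min lexx.
Qed.

Lemma compact_nested_closed (T : topologicalType) (K : nat -> set T) :
  compact [set: T] -> (forall n, closed (K n)) -> (forall n, K n.+1 `<=` K n) ->
  (forall n, K n !=set0) -> exists v, forall n, K n v.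
Proof.
move=> Tc K_closed K_nested K_nonempty.
have [c Kc] := @choice _ _ _ K_nonempty.
have K_sub m n : (m <= n)%N -> K n `<=` K m.
  elim: n => [|n IH]; first by rewrite leqn0 => /eqP ->.
  rewrite leq_eqVlt => /orP[/eqP -> // | mn].
  by apply: subset_trans (IH mn); exact: K_nested.
have [v] := compact_seq_cluster c Tc; rewrite clusterE => cv.
exists v => m; rewrite (closure_id (K m)).1 //; apply: cv.
by exists m => // n mn; exact: K_sub mn _ (Kc n).
Qed.

Lemma countable_surjection (T : Type) (t0 : T) : countable [set: T] ->
  exists e : nat -> T, forall y, exists n, e n = y.
Proof.
move=> /countable_injP [g g_inj].
pose e n := epsilon (inhabits t0) (fun y => g y = n).
exists e => y; exists (g y).
have : g (e (g y)) = g y.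
  by apply: (epsilon_spec (inhabits t0) (fun z => g z = g y)); exists y.
by apply: g_inj; rewrite in_setT.
Qed.

Section metric_space.
Variables (R : realType) (X : metricType R).
Local Open Scope ring_scope.

Lemma closed_ball_avoid (c y : X) (U : set X) : nbhs c U -> c != y ->
  exists2 s : R, 0 < s & closed_ball c s `<=` U /\ ~ closed_ball c s y.
Proof.
move=> Uc cy.
have yC : nbhs c (~` [set y]).
  apply: filterS (nbhsx_ballx c (mdist c y) _) => [z + zy|]; last by rewrite mdist_gt0.
  by rewrite zy ballEmdist /= ltxx.
have : nbhs c (U `&` ~` [set y]) by exact: filterI.
move=> /nbhs_ballP [s /= s_gt0 sU].
exists (s / 2); first by rewrite divr_gt0.
by split=> [z /(subset_closure_half s_gt0) /sU [] //
           | /(subset_closure_half s_gt0) /sU [_ /(_ erefl)]].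
Qed.

Lemma closed_ball_shrink_avoid (W : set X) (c y : X) (r : R) :
  (forall z, W z -> ~ \forall u \near z, W u -> u = z) -> W c -> 0 < r ->
  exists cs : X * R, [/\ W cs.1, 0 < cs.2, closed_ball cs.1 cs.2 `<=` closed_ball c r
    & ~ closed_ball cs.1 cs.2 y].
Proof.
move=> no_isolated Wc r_gt0; have r2_gt0 : 0 < r / 2 by rewrite divr_gt0.
have [c1 [Wc1 c1c] cc1] : exists2 c1, W c1 /\ c1 != c & ball c (r / 2) c1.
  apply: contrapT => no_c1; apply: (no_isolated c Wc).
  apply/nbhs_ballP; exists (r / 2) => //= u cu Wu; apply: contrapT => /eqP uc.
  by apply: no_c1; exists u.
have [c' [Wc' c'y] cc'] : exists2 c', W c' /\ c' != y & ball c (r / 2) c'.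
  case: (eqVneq c y) => [cy|cy]; first by exists c1; rewrite -?cy.
  by exists c => //; exact: ballxx.
have c'U : nbhs c' (ball c r).
  apply: filterS (nbhsx_ballx c' (r / 2) r2_gt0) => z c'z.
  by rewrite [r in ball c r]splitr; exact: ball_triangle cc' c'z.
have [s s_gt0 [sU sNy]] := closed_ball_avoid c'U c'y.
by exists (c', s); split=> //; apply: subset_trans sU _; exact: subset_closed_ball.
Qed.

Lemma countable_compact_isolated (W : set X) :
  compact [set: X] -> countable [set: X] -> W !=set0 ->
  exists2 z, W z & \forall y \near z, W y -> y = z.
Proof.
move=> Xc Xcount [c0 Wc0]; apply: contrapT => no_isolated.
have {}no_isolated z : W z -> ~ \forall u \near z, W u -> u = z.
  by move=> Wz z_iso; apply: no_isolated; exists z.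
have [e e_surj] := countable_surjection c0 Xcount.
(* Nested closed balls centred in W, the (n+1)-st avoiding [e n]: their common
   point is enumerated by no [n]. *)
have shrink (ncr : nat * (X * R)) : exists cs : X * R, W ncr.2.1 -> 0 < ncr.2.2 ->
    [/\ W cs.1, 0 < cs.2, closed_ball cs.1 cs.2 `<=` closed_ball ncr.2.1 ncr.2.2
      & ~ closed_ball cs.1 cs.2 (e ncr.1)].
  have [Wc|] := pselect (W ncr.2.1); last by exists ncr.2.
  have [r_gt0|] := pselect (0 < ncr.2.2); last by exists ncr.2.
  by have [cs ?] := closed_ball_shrink_avoid (e ncr.1) no_isolated Wc r_gt0; exists cs.
have [next nextP] := @choice _ _ _ shrink.
pose cr := fix cr n := if n is m.+1 then next (m, cr m) else (c0, 1).
have cr_valid n : W (cr n).1 /\ 0 < (cr n).2.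
  by elim: n => [|n [W_n r_n]] //=; have [] := nextP (n, cr n) W_n r_n.
have [v Kv] : exists v, forall n, closed_ball (cr n).1 (cr n).2 v.
  apply: compact_nested_closed Xc _ _ _ => n; first exact: closed_ball_closed.
    by have [W_n r_n] := cr_valid n; have [] := nextP (n, cr n) W_n r_n.
  by exists (cr n).1; exact: closed_ballxx (cr_valid n).2.
have [n en] := e_surj v; have [W_n r_n] := cr_valid n.
by have [_ _ _] := nextP (n, cr n) W_n r_n; rewrite en; apply; exact: Kv n.+1.
Qed.

End metric_space.

Section countable_compact_dynamics.
Variables (R : realType) (X : metricType R) (f : X -> X).
Hypotheses (fcont : continuous f) (Xcompact : compact [set: X])
  (Xcountable : countable [set: X])
  (accper : forall x : X, accumulation_point x -> periodic_point f x).
Local Open Scope ring_scope.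

Lemma omega_limit_periodic x y : omega_limit f x y -> periodic_point f y.
Proof.
move=> Oy; have [/accper //|/contrapT y_iso] := pselect (accumulation_point y).
exact: isolated_omega_limit_periodic y_iso Oy.
Qed.

Lemma omega_limit_isolated_orbit x z i : omega_limit f x z ->
  (\forall y \near z, omega_limit f x y -> y = z) ->
  \forall y \near iter i f z, omega_limit f x y -> forbit f z y.
Proof.
move=> Oz z_iso; have [k [k_gt0 zk]] := omega_limit_periodic Oz.
pose m := (k * i - i)%N. (* [iter m f] maps [iter i f z] back to [z]. *)
have near_z : nbhs (iter m f (iter i f z)) [set y | omega_limit f x y -> y = z].
  by rewrite iter_period_inv.
have near_iz : nbhs (iter i f z) (iter m f @^-1` [set y | omega_limit f x y -> y = z]).
  exact: (@continuous_iter _ f fcont m (iter i f z) _ near_z).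
apply: filterS near_iz => y /= y_iso Oy.
have [l [l_gt0 yl]] := omega_limit_periodic Oy.
exists (l * m - m)%N => //; rewrite -(y_iso (omega_limit_iter fcont (m := m) Oy)).
exact: iter_period_inv.
Qed.

Lemma omega_limit_sub_forbit_isolated x z : omega_limit f x z ->
  (\forall y \near z, omega_limit f x y -> y = z) -> omega_limit f x `<=` forbit f z.
Proof.
move=> Oz z_iso; have [k [k_gt0 zk]] := omega_limit_periodic Oz.
have near_orbit i := omega_limit_isolated_orbit i Oz z_iso.
have [r r_gt0 r_orbit] := nbhs_common_radius (fun i _ => near_orbit i) (k := k).
have r2_gt0 : 0 < r / 2 by rewrite divr_gt0.
pose U := [set y | exists2 i, (i < k)%N & ball (iter i f z) (r / 2) y].
have U_orbit y : forbit f z y -> nbhs y U.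
  rewrite (forbit_periodicE k_gt0 zk) => -[i ik <-].
  by apply: filterS (nbhsx_ballx _ _ r2_gt0) => u iu; exists i.
have clU_orbit y : omega_limit f x y -> closure U y -> forbit f z y.
  move=> Oy /(_ _ (nbhsx_ballx y _ r2_gt0)) [u [[i ik iu] yu]].
  apply: (r_orbit i ik) Oy; rewrite [r in ball _ r]splitr.
  exact: ball_triangle iu (ball_sym yu).
move=> w Ow; apply: contrapT => wNorb.
have [B Bw BNU] : exists2 B, nbhs w B & forall y, B y -> ~ U y.
  apply: contrapT => noB; apply/wNorb/(clU_orbit w Ow) => B Bw.
  by apply: contrapT => UB0; apply: noB; exists B => // y By Uy; apply: UB0; exists y.
have enter N : exists2 t, (N <= t)%N & U (iter t f x).
  exact: (cluster_seqP _ _).1 Oz U (U_orbit z (forbitxx f z)) N.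
have leave N : exists2 t, (N <= t)%N & ~ U (iter t f x).
  by have [t Nt /BNU] := (cluster_seqP _ _).1 Ow B Bw N; exists t.
have [v [Ov clUv clUCfv]] := omega_limit_exit fcont Xcompact enter leave.
have [u [nUu Uu]] := clUCfv U (U_orbit _ (forbitS (clU_orbit v Ov clUv))).
exact: nUu Uu.
Qed.

Lemma omega_limit_sub_forbit x c : omega_limit f x c -> omega_limit f x `<=` forbit f c.
Proof.
move=> Oc; have [z Oz z_iso] := countable_compact_isolated Xcompact Xcountable (ex_intro _ c Oc).
have Ox_z := omega_limit_sub_forbit_isolated Oz z_iso.
apply: (subset_trans Ox_z); apply: forbit_trans.
exact: forbit_periodic_sym (omega_limit_periodic Oz) (Ox_z c Oc).
Qed.

End countable_compact_dynamics.

Theorem theorem3p9 (R : realType) (X : metricType R) (f : X -> X)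
  (Xcompact : compact [set: X]) (Xcountable : countable [set: X])
  (fcont : continuous f)
  (accper : forall x : X, accumulation_point x -> periodic_point f x)
  (a : X) (acc_a : accumulation_point a)
  (an : nat -> X) (b : X)
  (an_cvg : an @ \oo --> a)
  (b_per : periodic_point f b) (b_notin : ~ forbit f a b)
  (b_cl : forall n : nat, closure (forbit f (an n)) b) :
  forall p : set_system nat, free_ultrafilter p ->
    ~ {for a, continuous (piterate p f)}.
Proof.
move=> p p_free; set g := piterate p f => g_cont.
have X_T1 : accessible_space X := hausdorff_accessible (@metric_hausdorff _ X).
have Og y : omega_limit f y (g y) := piterate_omega_limit (x := y) Xcompact p_free.
have Ox_sub := omega_limit_sub_forbit fcont Xcompact Xcountable accper.
have ga_orbit : forbit f a (g a).
  have Oaa : omega_limit f a a := forbit_periodic_omega_limit (accper a acc_a) (forbitxx f a).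
  exact: Ox_sub Oaa _ (Og a).
have gan_orbit n : forbit f b (g (an n)).
  exact: Ox_sub (closure_forbit_omega_limit X_T1 b_per (b_cl n)) _ (Og (an n)).
have gb_orbit : forbit f b (g a).
  have gan_cvg : (g \o an) @ \oo --> g a by apply: cvg_comp an_cvg g_cont.
  apply: (closed_cvg _ (forbit_periodic_closed X_T1 b_per) _ _ gan_cvg).
  exact: filterE.
by apply/b_notin/(forbit_trans ga_orbit); exact: forbit_periodic_sym b_per gb_orbit.
Qed.
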